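(* Every finite edge-transitive connected graph $K$ is edge-costly in the class of connected graphs.
   Context: ''Graph'' may be understood in any of the usual senses (directed, undirected, or mixed; multiple edges and/or loops allowed or not), fixed throughout; isomorphisms and automorphisms preserve the corresponding structure. ''Subgraph'' means an arbitrary (not necessarily induced) subgraph. A graph is edge-transitive if its automorphism group acts transitively on its edges. For a finite graph $K$ and a graph $\Gamma$, the edge representativeness $\Upsilon_e(K,\Gamma)$ is the minimal integer $n$ such that $\Gamma$ has a set $X$ of $n$ edges with the property that every subgraph of $\Gamma$ isomorphic to $K$ contains an edge of $X$; the symmetric edge representativeness $\Upsilon_e^{\mathrm{sym}}(K,\Gamma)$ is the minimal $n$ such that such a set $X$ of $n$ edges exists which is moreover invariant under $\mathrm{Aut}\,\Gamma$. A finite graph $K$ with $k$ edges is edge-costly in a class of graphs $\mathcal{K}$ if for every integer $m$ there exists a graph $\Gamma_m\in\mathcal{K}$ with $\Upsilon_e^{\mathrm{sym}}(K,\Gamma_m)=k\cdot\Upsilon_e(K,\Gamma_m)\ge m$. *)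

From Stdlib Require Import Relations.
From mathcomp Require Import all_boot all_fingroup.
Set Implicit Arguments. Unset Strict Implicit. Unset Printing Implicit Defensive.

(* Convention: graphs are SIMPLE UNDIRECTED graphs (no loops, no multiple edges). *)

Definition simple_graph (V : Type) (adj : V -> V -> Prop) : Prop :=
  (forall u v, adj u v -> adj v u) /\ (forall u, ~ adj u u).

Definition connected_graph (V : Type) (adj : V -> V -> Prop) : Prop :=
  inhabited V /\ forall u v, clos_refl_trans V adj u v.

Definition same_edge (V : Type) (p q : V * V) : Prop :=
  (p.1 = q.1 /\ p.2 = q.2) \/ (p.1 = q.2 /\ p.2 = q.1).

Definition edge_set_of_size (V : Type) (adj : V -> V -> Prop)
    (X : V -> V -> Prop) (n : nat) : Prop :=
  exists f : 'I_n -> V * V,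
    (forall i, adj (f i).1 (f i).2) /\
    (forall i j, same_edge (f i) (f j) -> i = j) /\
    (forall u v, X u v <-> exists i, same_edge (u, v) (f i)).

Definition graph_aut (V : Type) (adj : V -> V -> Prop) (s : V -> V) : Prop :=
  (exists t : V -> V, (forall v, t (s v) = v) /\ (forall v, s (t v) = v)) /\
  (forall u v, adj u v <-> adj (s u) (s v)).

Definition aut_invariant (V : Type) (adj : V -> V -> Prop) (X : V -> V -> Prop) : Prop :=
  forall s, graph_aut adj s -> forall u v, X u v -> X (s u) (s v).

(* every subgraph of Γ isomorphic to K (= image of an injective homomorphism
   K -> Γ) contains an edge of X *)
Definition represents (T : finType) (e : rel T) (V : Type) (adj : V -> V -> Prop)
    (X : V -> V -> Prop) : Prop :=
  forall phi : T -> V, injective phi -> (forall x y, e x y -> adj (phi x) (phi y)) ->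
    exists x y, e x y /\ X (phi x) (phi y).

Definition edge_repr_is (T : finType) (e : rel T) (V : Type) (adj : V -> V -> Prop)
    (n : nat) : Prop :=
  (exists X, edge_set_of_size adj X n /\ represents e adj X) /\
  (forall X m, edge_set_of_size adj X m -> represents e adj X -> n <= m).

Definition sym_edge_repr_is (T : finType) (e : rel T) (V : Type) (adj : V -> V -> Prop)
    (n : nat) : Prop :=
  (exists X, edge_set_of_size adj X n /\ aut_invariant adj X /\ represents e adj X) /\
  (forall X m, edge_set_of_size adj X m -> aut_invariant adj X ->
     represents e adj X -> n <= m).

Definition fsimple (T : finType) (e : rel T) : Prop := symmetric e /\ irreflexive e.

Definition fconnected (T : finType) (e : rel T) : Prop :=
  0 < #|T| /\ forall x y, connect e x y.

Definition faut (T : finType) (e : rel T) (s : {perm T}) : Prop :=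
  forall x y, e x y = e (s x) (s y).

Definition edge_transitive (T : finType) (e : rel T) : Prop :=
  forall x y x' y', e x y -> e x' y' ->
    exists s : {perm T}, faut e s /\ same_edge (s x, s y) (x', y').

Definition fedges (T : finType) (e : rel T) : {set {set T}} :=
  [set [set p.1; p.2] | p in [set p : (T * T)%type | e p.1 p.2]].

Definition num_edges (T : finType) (e : rel T) : nat := #|fedges e|.

Definition edge_costly_connected (T : finType) (e : rel T) : Prop :=
  forall m : nat, exists (V : Type) (adj : V -> V -> Prop),
    simple_graph adj /\ connected_graph adj /\
    exists n : nat, edge_repr_is e adj n /\
      sym_edge_repr_is e adj (num_edges e * n) /\ m <= num_edges e * n.

(* Fix an edge ab of K, which has k edges.  For every m we build a connected
   graph G with N >= m pairwise edge-disjoint copies of K such that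
   (1) the N copies of ab meet every subgraph of G isomorphic to K, and
   (2) Aut G preserves the union of the copies, and any edge of a copy is moved
       onto any other edge of the same copy by some automorphism.
   Edge-disjointness and (1) give Upsilon_e(K, G) = N.  By (2) the union of the
   copies is invariant, and an invariant representing set meets each copy,
   hence contains all of its edges: Upsilon_e^sym(K, G) = k N.
   An edge-transitive connected K has minimum degree 2 or is a star K_{1,r}:
   if one edge has a leaf end, all do.  The graphs G are:
   - minimum degree 2: m disjoint copies of K, each vertex joined to a common
     hub by a path with |K| + 1 inner vertices;
   - K_{1,r} with r >= 2: the functions g : leaves -> Z/(m+3) of weight 0 or 1,
     with g ~ g + delta_t, an r-regular graph whose stars at the weight-0
     vertices are the copies;
   - K_2: the star K_{1,m}. *)

From mathcomp Require Import all_boot all_fingroup all_algebra.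
From mathcomp Require Import zify ring.
From Stdlib Require Import Relations.
Set Implicit Arguments. Unset Strict Implicit. Unset Printing Implicit Defensive.

Section SameEdge.
Variable V : Type.
Implicit Types p q r : V * V.

Lemma same_edge_refl p : same_edge p p.
Proof. by left. Qed.

Lemma same_edge_sym p q : same_edge p q -> same_edge q p.
Proof. by case: p q => [a b] [c d] [[/= -> ->]|[/= -> ->]]; [left|right]. Qed.

Lemma same_edge_trans p q r : same_edge p q -> same_edge q r -> same_edge p r.
Proof.
case: p q r => [a b] [c d] [f g].
by case=> [[/= -> ->]|[/= -> ->]] [[/= -> ->]|[/= -> ->]]; rewrite /same_edge; auto.
Qed.

Lemma same_edge_swap (u v : V) : same_edge (u, v) (v, u).
Proof. by right. Qed.

Lemma same_edge_map (W : Type) (f : V -> W) p q :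
  same_edge p q -> same_edge (f p.1, f p.2) (f q.1, f q.2).
Proof. by case=> [[-> ->]|[-> ->]]; [left|right]. Qed.

Lemma same_edge_adj (adj : V -> V -> Prop) u v x z :
  (forall u v, adj u v -> adj v u) -> same_edge (u, v) (x, z) -> adj x z -> adj u v.
Proof. by move=> adj_sym [[/= -> ->]|[/= -> ->]] //; apply: adj_sym. Qed.

End SameEdge.

Lemma same_edge_set2 (T : finType) (V : Type) (f : T -> V) x z x' z' :
  [set x; z] = [set x'; z'] -> same_edge (f x, f z) (f x', f z').
Proof.
move=> xz_eq.
have: x \in [set x'; z'] by rewrite -xz_eq set21.
have: z \in [set x'; z'] by rewrite -xz_eq set22.
have: x' \in [set x; z] by rewrite xz_eq set21.
have: z' \in [set x; z] by rewrite xz_eq set22.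
by rewrite !inE => /pred2P[] ? /pred2P[] ? /pred2P[] ? /pred2P[] ?; subst;
  rewrite /same_edge; auto.
Qed.

Lemma set2_same_edge (T : finType) (V : Type) (f : T -> V) x z x' z' :
  injective f -> same_edge (f x, f z) (f x', f z') -> [set x; z] = [set x'; z'].
Proof. by move=> f_inj [[/= /f_inj-> /f_inj->]|[/= /f_inj-> /f_inj->]] //; apply: setUC. Qed.

Lemma clos_refl_trans_sym (V : Type) (adj : V -> V -> Prop) :
  (forall u v, adj u v -> adj v u) ->
  forall u v, clos_refl_trans V adj u v -> clos_refl_trans V adj v u.
Proof.
move=> adj_sym u v; elim=> [x y /adj_sym|x|x y z _ yx _ zy].
- exact: rt_step.
- exact: rt_refl.
- exact: rt_trans zy yx.
Qed.

Lemma connected_via (V : Type) (adj : V -> V -> Prop) (c : V) :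
  (forall u v, adj u v -> adj v u) -> (forall u, clos_refl_trans V adj u c) ->
  connected_graph adj.
Proof.
move=> adj_sym to_c; split; first exact: inhabits c.
by move=> u v; apply: rt_trans (to_c u) (clos_refl_trans_sym adj_sym (to_c v)).
Qed.

Lemma fsimple_edge_neq (T : finType) (e : rel T) x z : fsimple e -> e x z -> x != z.
Proof. by case=> _ e_irr; apply: contraTneq => ->; rewrite e_irr. Qed.

Lemma edge_set_same_edge (V : Type) (adj : V -> V -> Prop) X m u v u' v' :
  edge_set_of_size adj X m -> same_edge (u, v) (u', v') -> X u v -> X u' v'.
Proof.
case=> f [_ [_ XE]] uv /XE[n uv_n]; apply/XE; exists n.
exact: same_edge_trans (same_edge_sym uv) uv_n.
Qed.

Section EdgeSets.
Variables (V : Type) (adj : V -> V -> Prop) (J : finType) (g : J -> V * V).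
Hypothesis g_adj : forall j, adj (g j).1 (g j).2.
Hypothesis g_distinct : forall j j', same_edge (g j) (g j') -> j = j'.

Lemma edge_set_of_family (X : V -> V -> Prop) :
  (forall u v, X u v <-> exists j, same_edge (u, v) (g j)) ->
  edge_set_of_size adj X #|J|.
Proof.
move=> XE; exists (g \o enum_val); split; [|split].
- by move=> n; apply: g_adj.
- by move=> n n' /g_distinct /enum_val_inj.
- move=> u v; rewrite XE; split=> [[j uv_j]|[n uv_n]]; last by exists (enum_val n).
  by exists (enum_rank j); rewrite /= enum_rankK.
Qed.

Lemma edge_set_size_ge (X : V -> V -> Prop) m :
  edge_set_of_size adj X m -> (forall j, X (g j).1 (g j).2) -> #|J| <= m.
Proof.
case=> f [_ [_ XE]] Xg.
have /fin_all_exists [h gh] : forall j, exists n, same_edge (g j) (f n).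
  by move=> j; case/XE: (Xg j) => n; rewrite -surjective_pairing; exists n.
have h_inj : injective h.
  move=> j j' hj; apply/g_distinct/(same_edge_trans (gh j)).
  by rewrite hj; apply: same_edge_sym.
by rewrite -[m]card_ord (leq_card _ h_inj).
Qed.

End EdgeSets.

Section EdgeEnds.
Variables (T : finType) (e : rel T).

Lemma set2_fedges x z : e x z -> [set x; z] \in fedges e.
Proof. by move=> exz; apply/imsetP; exists (x, z); rewrite ?inE. Qed.

Lemma fedges_ends E :
  E \in fedges e -> exists2 p : T * T, e p.1 p.2 & E = [set p.1; p.2].
Proof. by case/imsetP=> p; rewrite inE; exists p. Qed.

Lemma num_edges_gt0 a b : e a b -> 0 < num_edges e.
Proof. by move/set2_fedges => ab_in; rewrite card_gt0; apply/set0Pn; exists [set a; b]. Qed.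

Lemma edge_of_num_edges : 0 < num_edges e -> exists a b, e a b.
Proof. by rewrite card_gt0 => /set0Pn[E /fedges_ends[p ep _]]; exists p.1, p.2. Qed.

Definition edge_ends (p0 : T * T) (E : {set T}) : T * T :=
  odflt p0 [pick p : T * T | e p.1 p.2 && (E == [set p.1; p.2])].

Lemma edge_endsP p0 E : E \in fedges e ->
  e (edge_ends p0 E).1 (edge_ends p0 E).2 /\
  E = [set (edge_ends p0 E).1; (edge_ends p0 E).2].
Proof.
move=> /fedges_ends[q eq Eq]; rewrite /edge_ends; case: pickP => [p /andP[? /eqP] //|].
by move/(_ q); rewrite eq Eq eqxx.
Qed.

End EdgeEnds.

Section EdgeDisjointCopies.
Variables (T : finType) (e : rel T) (V : Type) (adj : V -> V -> Prop).
Variables (I : finType) (psi : I -> T -> V).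
Hypothesis psi_inj : forall i, injective (psi i).
Hypothesis psi_hom : forall i x z, e x z -> adj (psi i x) (psi i z).
Hypothesis psi_edge_disjoint : forall i j x z x' z', e x z -> e x' z' ->
  same_edge (psi i x, psi i z) (psi j x', psi j z') -> i = j.
Hypothesis psi_edge_transitive : forall i x z x' z', e x z -> e x' z' ->
  exists2 s, graph_aut adj s & same_edge (s (psi i x), s (psi i z)) (psi i x', psi i z').
Variables a b : T.
Hypothesis e_ab : e a b.

Definition copy_rep_edges (u v : V) : Prop :=
  exists i, same_edge (u, v) (psi i a, psi i b).

Definition copy_edges (u v : V) : Prop :=
  exists i x z, e x z /\ same_edge (u, v) (psi i x, psi i z).

Lemma copy_rep_edges_size : edge_set_of_size adj copy_rep_edges #|I|.
Proof.
apply: (edge_set_of_family (g := fun i => (psi i a, psi i b))) => //.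
- by move=> i; apply: psi_hom.
- by move=> i j /(psi_edge_disjoint e_ab e_ab).
Qed.

Local Notation edge_of_K := {E : {set T} | E \in fedges e}.
Local Notation ends E := (edge_ends e (a, b) (val E)).

Definition copy_edge (Ei : edge_of_K * I) : V * V :=
  let: (E, i) := Ei in (psi i (ends E).1, psi i (ends E).2).

Lemma copy_edge_ends (E : edge_of_K) : e (ends E).1 (ends E).2.
Proof. by case: (edge_endsP (a, b) (valP E)). Qed.

Lemma copy_edge_adj Ei : adj (copy_edge Ei).1 (copy_edge Ei).2.
Proof. by case: Ei => E i; apply/psi_hom/copy_edge_ends. Qed.

Lemma copy_edge_distinct Ei Ei' : same_edge (copy_edge Ei) (copy_edge Ei') -> Ei = Ei'.
Proof.
case: Ei Ei' => [E i] [E' i'] /[dup].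
move=> /(psi_edge_disjoint (copy_edge_ends E) (copy_edge_ends E')) <-.
move=> /(set2_same_edge (@psi_inj i)) ends_eq; congr (_, _); apply: val_inj.
by case: (edge_endsP (a, b) (valP E)) (edge_endsP (a, b) (valP E')) => _ -> [_ ->].
Qed.

Lemma copy_edges_size : edge_set_of_size adj copy_edges (num_edges e * #|I|).
Proof.
rewrite /num_edges -(card_sig (mem (fedges e))) -card_prod.
apply: (edge_set_of_family copy_edge_adj copy_edge_distinct).
move=> u v; split=> [[i [x [z [exz uv]]]]|[[E i] uv]]; last first.
  by exists i, (ends E).1, (ends E).2; split=> //; apply: copy_edge_ends.
have xz_in := set2_fedges exz.
exists (exist (fun E => E \in fedges e) _ xz_in, i); apply: (same_edge_trans uv).
by apply: same_edge_set2; case: (edge_endsP (a, b) xz_in).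
Qed.

Lemma represents_copy X :
  represents e adj X -> forall i, exists x z, e x z /\ X (psi i x) (psi i z).
Proof. by move=> X_rep i; apply: X_rep (@psi_inj i) (psi_hom i). Qed.

Lemma edge_repr_copies : represents e adj copy_rep_edges -> edge_repr_is e adj #|I|.
Proof.
move=> rep_rep; split; first by exists copy_rep_edges; split; [apply: copy_rep_edges_size|].
move=> X m X_size /represents_copy /fin_all_exists[x /fin_all_exists[z hit]].
apply: (edge_set_size_ge (g := fun i => (psi i (x i), psi i (z i)))) X_size _.
- by move=> i j /(psi_edge_disjoint (proj1 (hit i)) (proj1 (hit j))).
- by move=> i; case: (hit i).
Qed.

Lemma sym_edge_repr_copies : represents e adj copy_rep_edges ->
  aut_invariant adj copy_edges -> sym_edge_repr_is e adj (num_edges e * #|I|).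
Proof.
move=> rep_rep edges_inv; split.
  exists copy_edges; split; first exact: copy_edges_size.
  split=> // phi phi_inj phi_hom; have [x [z [exz [i uv]]]] := rep_rep phi phi_inj phi_hom.
  by exists x, z; split=> //; exists i, a, b.
move=> X m X_size X_inv X_rep.
rewrite /num_edges -(card_sig (mem (fedges e))) -card_prod.
apply: (edge_set_size_ge copy_edge_distinct X_size) => -[E i].
have [x [z [exz X_xz]]] := represents_copy X_rep i.
have [s s_aut s_xz] := psi_edge_transitive i exz (copy_edge_ends E).
exact: edge_set_same_edge X_size s_xz (X_inv s s_aut _ _ X_xz).
Qed.

End EdgeDisjointCopies.

Lemma inj_hom_edge_surj (T : finType) (e : rel T) (k : T -> T) :
  injective k -> (forall x y, e x y -> e (k x) (k y)) ->
  forall a b, e a b -> exists x y, [/\ e x y, k x = a & k y = b].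
Proof.
move=> k_inj k_hom a b e_ab.
pose E := [set p : T * T | e p.1 p.2].
pose kk (p : T * T) := (k p.1, k p.2).
have kk_inj : injective kk by move=> [? ?] [? ?] [/k_inj-> /k_inj->].
have kE_sub : kk @: E \subset E.
  by apply/subsetP=> q /imsetP[p]; rewrite !inE => ep ->; apply: k_hom.
have /(_ (a, b)) := subset_cardP (card_imset E kk_inj) kE_sub.
by rewrite !inE e_ab => /imsetP[[x y]]; rewrite inE => e_xy [-> ->]; exists x, y.
Qed.

Lemma aut_inj (V : Type) (adj : V -> V -> Prop) s : graph_aut adj s -> injective s.
Proof. by case=> [[t [sK _]] _] u v suv; rewrite -(sK u) -(sK v) suv. Qed.

Definition three_nbrs (V : Type) (adj : V -> V -> Prop) (u : V) : Prop :=
  exists w1 w2 w3, [/\ adj u w1, adj u w2 & adj u w3] /\ [/\ w1 <> w2, w1 <> w3 & w2 <> w3].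

Lemma aut_three_nbrs (V : Type) (adj : V -> V -> Prop) s u :
  graph_aut adj s -> three_nbrs adj u -> three_nbrs adj (s u).
Proof.
move=> s_aut [w1 [w2 [w3 [[u1 u2 u3] [n12 n13 n23]]]]].
have s_inj := aut_inj s_aut; have [_ s_adj] := s_aut.
exists (s w1), (s w2), (s w3); split; split.
1-3: exact: (proj1 (s_adj _ _)).
all: by move/s_inj.
Qed.

Section PendantPaths.
Variables (T : finType) (e : rel T) (nu : nat).
Hypothesis e_simple : fsimple e.

Local Notation L := #|T|.+1.

(* [Tail i x j] is the [j]-th inner vertex of the path from [Copy i x] to [Hub]. *)
Inductive hub_vertex : Type :=
  | Copy of 'I_nu & T
  | Tail of 'I_nu & T & 'I_L
  | Hub.

Definition hub_adj (u v : hub_vertex) : Prop :=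
  match u, v with
  | Copy i x, Copy i' y => i = i' /\ e x y
  | Copy i x, Tail i' y j | Tail i' y j, Copy i x => [/\ i = i', x = y & j = 0 :> nat]
  | Tail i x j, Tail i' y j' => [/\ i = i', x = y & (j' = j.+1 :> nat \/ j = j'.+1 :> nat)]
  | Tail _ _ j, Hub | Hub, Tail _ _ j => j = #|T| :> nat
  | _, _ => False
  end.

Lemma hub_adj_sym u v : hub_adj u v -> hub_adj v u.
Proof.
have [e_sym _] := e_simple.
case: u v => [i x|i x j|] [i' y|i' y j'|] //=.
- by case=> -> exy; rewrite e_sym.
- by case=> -> -> [] ?; split; auto.
Qed.

Lemma hub_adj_irr u : ~ hub_adj u u.
Proof.
have [_ e_irr] := e_simple.
by case: u => [i x|i x j|] //= [_]; [rewrite e_irr | move=> _ []; lia].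
Qed.

Lemma hub_simple : simple_graph hub_adj.
Proof. by split; [apply: hub_adj_sym | apply: hub_adj_irr]. Qed.

Lemma tail_to_hub i x k (j : 'I_L) :
  j + k = #|T| -> clos_refl_trans _ hub_adj (Tail i x j) Hub.
Proof.
elim: k j => [|k IHk] j jk; first by apply: rt_step; rewrite /= -[nat_of_ord j]addn0.
have j1_lt : j.+1 < L by lia.
apply: rt_trans (IHk (Ordinal j1_lt) _); last by rewrite /= addSnnS.
by apply: rt_step; split=> //; left.
Qed.

Lemma hub_connected : connected_graph hub_adj.
Proof.
apply: (connected_via hub_adj_sym (c := Hub)) => -[i x|i x j|]; last exact: rt_refl.
- apply: rt_trans (@tail_to_hub i x #|T| ord0 _) => //.
  exact: rt_step.
- by apply: (@tail_to_hub _ _ (#|T| - j)); have := ltn_ord j; lia.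
Qed.

Definition lift_aut (s : T -> T) (i : 'I_nu) (v : hub_vertex) : hub_vertex :=
  match v with
  | Copy i' x => if i' == i then Copy i' (s x) else v
  | Tail i' x j => if i' == i then Tail i' (s x) j else v
  | Hub => Hub
  end.

Lemma lift_autK (s : {perm T}) i : cancel (lift_aut s i) (lift_aut (s^-1)%g i).
Proof.
by case=> [i' x|i' x j|] //=; case: eqP => [->|/eqP/negPf] /=; rewrite ?eqxx ?permK // => ->.
Qed.

Lemma lift_aut_hom (s : {perm T}) i : faut e s ->
  forall u v, hub_adj u v -> hub_adj (lift_aut s i u) (lift_aut s i v).
Proof.
move=> s_aut u v; case: u v => [i1 x|i1 x j|] [i2 y|i2 y j'|] //=;
  try by case: eqP.
- by case=> <- exy; case: eqP => //= _; rewrite -s_aut.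
- by case=> <- <- j0; case: eqP.
- by case=> <- <- j0; case: eqP.
- by case=> <- <- jj'; case: eqP.
Qed.

Lemma lift_graph_aut (s : {perm T}) i : faut e s -> graph_aut hub_adj (lift_aut s i).
Proof.
move=> s_aut; have sV_aut : faut e (s^-1)%g by move=> x y; rewrite [RHS]s_aut !permKV.
split.
  by exists (lift_aut (s^-1)%g i); split=> v; rewrite ?lift_autK // -{1}[s]invgK lift_autK.
move=> u v; split; first exact: lift_aut_hom.
by move/(lift_aut_hom i sV_aut); rewrite !lift_autK.
Qed.

Definition tail_down i x (j : 'I_L) : hub_vertex :=
  if nat_of_ord j is k.+1 then Tail i x (inord k) else Copy i x.

Definition tail_up i x (j : 'I_L) : hub_vertex :=
  if j == #|T| :> nat then Hub else Tail i x (inord j.+1).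

Lemma tail_nbrs i x j w :
  hub_adj (Tail i x j) w -> w = tail_down i x j \/ w = tail_up i x j.
Proof.
rewrite /tail_down /tail_up; case: w => [i' y|i' y j'|] /=.
- by case=> -> -> ->; left.
- case=> <- <- [] jj'.
  + right; have /ltn_eqF-> : j < #|T| by rewrite -ltnS -jj'.
    by congr Tail; apply: val_inj => /=; rewrite inordK // -jj'.
  + by left; rewrite jj'; congr Tail; apply: val_inj => /=; rewrite inordK // -ltnS -jj'.
- by move=> ->; right; rewrite eqxx.
Qed.

Lemma tail_not_three_nbrs i x j : ~ three_nbrs hub_adj (Tail i x j).
Proof.
case=> w1 [w2 [w3 [[/tail_nbrs[]-> /tail_nbrs[]-> /tail_nbrs[]->] [n12 n13 n23]]]]; by [].
Qed.

Hypothesis two_nbrs : forall x, exists z1 z2, [/\ z1 != z2, e x z1 & e x z2].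

Lemma copy_three_nbrs i x : three_nbrs hub_adj (Copy i x).
Proof.
have [z1 [z2 [z12 xz1 xz2]]] := two_nbrs x.
exists (Copy i z1), (Copy i z2), (Tail i x ord0); split; split=> //.
by case=> /eqP; rewrite (negPf z12).
Qed.

Section Embedding.
Variable phi : T -> hub_vertex.
Hypothesis phi_inj : injective phi.
Hypothesis phi_hom : forall x y, e x y -> hub_adj (phi x) (phi y).

Definition in_image v := exists t, phi t = v.

(* The preimage of a tail vertex has two distinct neighbours, and a tail vertex
   has only two. *)
Lemma tail_image_nbrs i x j :
  in_image (Tail i x j) -> in_image (tail_down i x j) /\ in_image (tail_up i x j).
Proof.
case=> t phi_t; have [z1 [z2 [z12 tz1 tz2]]] := two_nbrs t.
have phi_z12 : phi z1 <> phi z2 by move/phi_inj/eqP; rewrite (negPf z12).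
have := phi_hom tz1; have := phi_hom tz2; rewrite phi_t.
move=> /tail_nbrs[] z2E /tail_nbrs[] z1E.
- by case: phi_z12; rewrite z1E z2E.
- by split; [exists z2 | exists z1].
- by split; [exists z1 | exists z2].
- by case: phi_z12; rewrite z1E z2E.
Qed.

Lemma tail_image_all i x j : in_image (Tail i x j) -> forall j', in_image (Tail i x j').
Proof.
have down k (j' : 'I_L) :
    j' = k :> nat -> in_image (Tail i x j') -> in_image (Tail i x ord0).
  elim: k j' => [|k IHk] j' j'k im.
    by rewrite (_ : ord0 = j') //; apply: val_inj; rewrite /= j'k.
  apply: (IHk (inord k)); first by rewrite inordK //; have := ltn_ord j'; lia.
  by have [+ _] := tail_image_nbrs im; rewrite /tail_down j'k.
move=> /(down _ _ erefl) im0 j'; rewrite -[j']inord_val.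
elim: (nat_of_ord j') (ltn_ord j') => [|k IHk] kL.
  by rewrite (_ : inord 0 = ord0) //; apply: val_inj => /=; rewrite inordK.
have [_] := tail_image_nbrs (IHk (ltnW kL)).
by rewrite /tail_up inordK ?ltn_eqF //; lia.
Qed.

Lemma not_tail_image i x j : ~ in_image (Tail i x j).
Proof.
move/tail_image_all/fin_all_exists=> [g phi_g].
have g_inj : injective g by move=> j1 j2 g12; have := phi_g j1; rewrite g12 phi_g => -[].
by have := leq_card _ g_inj; rewrite card_ord ltnn.
Qed.

Lemma image_in_one_copy (t0 : T) (e_connected : forall x y, connect e x y) :
  exists i (k : T -> T), forall t, phi t = Copy i (k t).
Proof.
have copyP t : exists i x, phi t = Copy i x.
  case phi_t: (phi t) => [i x|i x j|]; first by exists i, x.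
    by exfalso; apply: (@not_tail_image i x j); exists t.
  have [z [_ [_ tz _]]] := two_nbrs t; have := phi_hom tz; rewrite phi_t.
  case phi_z: (phi z) => [? ?|i x j|] //= _.
  by exfalso; apply: (@not_tail_image i x j); exists z.
have /fin_all_exists[c /fin_all_exists[k phi_ck]] := copyP.
have c_closed : closed e [pred t | c t == c t0].
  by move=> t z /phi_hom; rewrite !inE !phi_ck => -[->].
exists (c t0), k => t; rewrite phi_ck.
by have := closed_connect c_closed (e_connected t0 t); rewrite !inE eqxx => /esym/eqP->.
Qed.

End Embedding.

Hypothesis e_connected : forall x y, connect e x y.
Hypothesis e_transitive : edge_transitive e.
Variables a b : T.
Hypothesis e_ab : e a b.

Lemma hub_copy_reps_represent : represents e hub_adj (copy_rep_edges Copy a b).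
Proof.
move=> phi phi_inj phi_hom.
have [i [k phi_k]] := image_in_one_copy phi_inj phi_hom a e_connected.
have k_inj : injective k by move=> x y kxy; apply: phi_inj; rewrite !phi_k kxy.
have k_hom x y : e x y -> e (k x) (k y) by move/phi_hom; rewrite !phi_k => -[].
have [x [z [exz kx kz]]] := inj_hom_edge_surj k_inj k_hom e_ab.
by exists x, z; split=> //; exists i; rewrite !phi_k kx kz; apply: same_edge_refl.
Qed.

(* Copy vertices have three distinct neighbours, tail vertices only two, and the
   hub is adjacent to no copy vertex. *)
Lemma hub_copy_edges_invariant : aut_invariant hub_adj (copy_edges e Copy).
Proof.
have [e_sym _] := e_simple.
move=> s s_aut u v [i [x [z [exz uv]]]].
have three_s w : (exists i x, w = Copy i x) -> three_nbrs hub_adj (s w).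
  by move=> [i' [x' ->]]; apply/(aut_three_nbrs s_aut)/copy_three_nbrs.
have [/three_s su /three_s sv] : (exists i x, u = Copy i x) /\ (exists i x, v = Copy i x).
  by case: uv => -[/= -> ->]; split; do 2!eexists.
have [_ s_adj] := s_aut.
have /s_adj : hub_adj u v by apply: (same_edge_adj hub_adj_sym uv); split.
case: (s u) su => [i1 x1|i1 x1 j1|] su; last 2 first.
- by case: (tail_not_three_nbrs su).
- by case: (s v) sv => [? ?|i2 x2 j2 /tail_not_three_nbrs|].
case: (s v) sv => [i2 x2|i2 x2 j2|] sv //=.
- by case=> <- ex12; exists i1, x1, x2; split=> //; apply: same_edge_refl.
- by case: (tail_not_three_nbrs sv).
Qed.

Lemma hub_edge_repr :
  edge_repr_is e hub_adj nu /\ sym_edge_repr_is e hub_adj (num_edges e * nu).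
Proof.
have copy_inj i : injective (Copy i) by move=> x y [].
have copy_hom i x y : e x y -> hub_adj (Copy i x) (Copy i y) by [].
have copy_disjoint i j x z x' z' : e x z -> e x' z' ->
    same_edge (Copy i x, Copy i z) (Copy j x', Copy j z') -> i = j.
  by move=> _ _ [[/= [-> _] _]|[/= [-> _] _]].
have copy_transitive i x z x' z' : e x z -> e x' z' -> exists2 s, graph_aut hub_adj s &
    same_edge (s (Copy i x), s (Copy i z)) (Copy i x', Copy i z').
  move=> exz exz'; have [s [s_aut sxz]] := e_transitive exz exz'.
  exists (lift_aut s i); first exact: lift_graph_aut.
  by rewrite /= eqxx; apply: (same_edge_map (Copy i) sxz).
rewrite -[in edge_repr_is _ _ nu](card_ord nu) -[in num_edges e * nu](card_ord nu).
split; first exact: (edge_repr_copies (@copy_inj) copy_hom copy_disjoint e_ab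
  hub_copy_reps_represent).
exact: (sym_edge_repr_copies (@copy_inj) copy_hom copy_disjoint copy_transitive e_ab
  hub_copy_reps_represent hub_copy_edges_invariant).
Qed.

End PendantPaths.

Section StarLayers.
Variables (T : finType) (e : rel T) (y t0 : T) (n : nat).
Hypothesis e_simple : fsimple e.
Hypothesis star_center : forall t, t != y -> e y t.
Hypothesis star_edge : forall u v, e u v -> u = y \/ v = y.
Hypothesis t0_leaf : t0 != y.

Import GRing.Theory.
Local Open Scope ring_scope.

(* Working modulo n + 3 >= 3 keeps the weights 0, 1 and 2 apart, so that the
   graph below is bipartite between weights 0 and 1.  Functions on T vanishing
   at the centre [y] stand for functions on the leaves. *)
Local Notation zq := 'Z_(n.+3).
Local Notation fn := {ffun T -> zq}.

Definition delta (t : T) : fn := [ffun s => (s == t)%:R].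
Definition weight (g : fn) : zq := \sum_s g s.
Definition is_layer_vertex (g : fn) : bool :=
  (g y == 0) && ((weight g == 0) || (weight g == 1)).
Definition is_layer_base (g : fn) : bool := (g y == 0) && (weight g == 0).
Definition layer_vertex := {g : fn | is_layer_vertex g}.
Definition layer_base := {g : fn | is_layer_base g}.

Definition layer_adj (u v : layer_vertex) : Prop :=
  exists2 t, t != y & (val v = val u + delta t \/ val u = val v + delta t).

Lemma weightD g h : weight (g + h) = weight g + weight h.
Proof. by rewrite /weight -big_split; apply: eq_bigr => s _; rewrite ffunE. Qed.

Lemma weightB g h : weight (g - h) = weight g - weight h.
Proof. by rewrite /weight -sumrB; apply: eq_bigr => s _; rewrite !ffunE. Qed.

Lemma weightMn g k : weight (g *+ k) = weight g *+ k.
Proof. by rewrite /weight -sumrMnl; apply: eq_bigr => s _; rewrite ffunMnE. Qed.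

Lemma weight_delta t : weight (delta t) = 1.
Proof.
rewrite /weight (bigD1 t) //= big1 => [|s /negPf st]; rewrite ffunE ?st //.
by rewrite eqxx addr0.
Qed.

Lemma weight0 : weight 0 = 0.
Proof. by rewrite /weight big1 // => s _; rewrite ffunE. Qed.

Lemma two_neq0 : (1 + 1 : zq) != 0.
Proof. by apply/eqP => /(congr1 val) /=; rewrite !modn_small. Qed.

Lemma two_neq1 : (1 + 1 : zq) != 1.
Proof. by apply/eqP => /(congr1 val) /=; rewrite !modn_small. Qed.

Lemma add_delta_neq (g : fn) t : g + delta t != g.
Proof.
apply/eqP => /ffunP/(_ t); rewrite ffunE -[RHS]addr0 => /addrI/eqP.
by rewrite ffunE eqxx oner_eq0.
Qed.

Lemma base_is_vertex g : is_layer_base g -> is_layer_vertex g.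
Proof. by case/andP=> gy wg; rewrite /is_layer_vertex gy wg. Qed.

Lemma layer_base0 : is_layer_base 0.
Proof. by rewrite /is_layer_base weight0 ffunE eqxx. Qed.

Definition to_vertex (g : fn) : layer_vertex :=
  insubd (exist _ 0 (base_is_vertex layer_base0)) g.

Definition to_base (g : fn) : layer_base := insubd (exist _ 0 layer_base0) g.

Lemma to_vertexK g : is_layer_vertex g -> val (to_vertex g) = g.
Proof. exact: insubdK. Qed.

Lemma val_to_vertex (v : layer_vertex) : to_vertex (val v) = v.
Proof. exact: valKd. Qed.

Lemma to_baseK g : is_layer_base g -> val (to_base g) = g.
Proof. exact: insubdK. Qed.

Lemma vertex_up g t : is_layer_base g -> t != y -> is_layer_vertex (g + delta t).
Proof.
case/andP=> /eqP gy /eqP wg ty; rewrite /is_layer_vertex weightD weight_delta wg add0r.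
by rewrite eqxx orbT !ffunE gy (eq_sym y t) (negPf ty) addr0.
Qed.

Lemma vertex_down g t :
  is_layer_vertex g -> weight g = 1 -> t != y -> is_layer_base (g - delta t).
Proof.
case/andP=> /eqP gy _ wg ty; rewrite /is_layer_base weightB weight_delta wg subrr.
by rewrite eqxx andbT !ffunE gy (eq_sym y t) (negPf ty) subr0.
Qed.

Lemma layer_weight (v : layer_vertex) : weight (val v) = 0 \/ weight (val v) = 1.
Proof. by case/andP: (valP v) => _ /orP[] /eqP->; [left | right]. Qed.

Lemma vertex_base (v : layer_vertex) : weight (val v) = 0 -> is_layer_base (val v).
Proof. by case/andP: (valP v) => vy _ wv; rewrite /is_layer_base vy wv eqxx. Qed.

Lemma base_weight (a : layer_base) : weight (val a) = 0.
Proof. by case/andP: (valP a) => _ /eqP. Qed.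

Lemma add_delta_weight (u v : layer_vertex) t :
  val v = val u + delta t -> weight (val u) = 0 /\ weight (val v) = 1.
Proof.
case/andP: (valP u) (valP v) => _ wu /andP[_ wv] uv.
move: wv; rewrite uv weightD weight_delta.
by case/orP: wu => /eqP->; rewrite ?add0r ?eqxx ?orbT // (negPf two_neq0) (negPf two_neq1).
Qed.

Lemma layer_simple : simple_graph layer_adj.
Proof.
split=> [u v [t ty uv]|u [t _ uu]]; first by exists t; last by case: uv; auto.
by case: uu => /esym/eqP; rewrite (negPf (add_delta_neq _ _)).
Qed.

Definition star_copy (a : layer_base) (x : T) : layer_vertex :=
  to_vertex (if x == y then val a else val a + delta x).

Lemma star_copy_center a : val (star_copy a y) = val a.
Proof. by rewrite /star_copy eqxx to_vertexK ?base_is_vertex ?(valP a). Qed.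

Lemma star_copy_leaf a t : t != y -> val (star_copy a t) = val a + delta t.
Proof. by move=> ty; rewrite /star_copy (negPf ty) to_vertexK ?vertex_up ?(valP a). Qed.

Lemma star_copy_center_neq_leaf a c t : t != y -> star_copy a y <> star_copy c t.
Proof.
move=> ty /(congr1 (weight \o val)) /=; rewrite star_copy_center star_copy_leaf //.
by rewrite weightD weight_delta !base_weight add0r => /eqP; rewrite eq_sym oner_eq0.
Qed.

Lemma star_copy_inj a : injective (star_copy a).
Proof.
move=> x z xz; have [xy|xy] := eqVneq x y; have [zy|zy] := eqVneq z y.
- by rewrite xy zy.
- by move: xz; rewrite xy => /(star_copy_center_neq_leaf zy).
- by move: xz; rewrite zy => /esym/(star_copy_center_neq_leaf xy).
- move/(congr1 val): xz; rewrite !star_copy_leaf // => /addrI/ffunP/(_ x)/eqP.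
  by rewrite !ffunE eqxx; case: (x =P z) => // _; rewrite eq_sym oner_eq0.
Qed.

Lemma star_copy_step (w w' : layer_vertex) t : t != y -> val w' = val w + delta t ->
  star_copy (to_base (val w)) y = w /\ star_copy (to_base (val w)) t = w'.
Proof.
move=> ty ww'; have [/vertex_base w_base _] := add_delta_weight ww'.
by split; apply: val_inj; rewrite ?star_copy_center ?star_copy_leaf // to_baseK.
Qed.

Lemma star_edge_set2 x z : e x z -> exists2 t, t != y & [set x; z] = [set y; t].
Proof.
move=> exz; have xz := fsimple_edge_neq e_simple exz.
case: (star_edge exz) => [xy|zy]; [exists z | exists x].
- by rewrite -xy eq_sym.
- by rewrite xy.
- by rewrite -zy.
- by rewrite zy setUC.
Qed.

Lemma star_copy_hom a x z : e x z -> layer_adj (star_copy a x) (star_copy a z).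
Proof.
move=> /star_edge_set2[t ty /(same_edge_set2 (star_copy a)) xz_yt].
apply: (same_edge_adj (proj1 layer_simple) xz_yt).
by exists t => //; left; rewrite star_copy_center star_copy_leaf.
Qed.

Lemma star_copy_disjoint a c x z x' z' : e x z -> e x' z' ->
  same_edge (star_copy a x, star_copy a z) (star_copy c x', star_copy c z') -> a = c.
Proof.
move=> /star_edge_set2[t ty /(same_edge_set2 (star_copy a)) axz].
move=> /star_edge_set2[t' ty' /(same_edge_set2 (star_copy c)) cxz] xz_xz'.
have := same_edge_trans (same_edge_trans (same_edge_sym axz) xz_xz') cxz.
case=> -[/= ac _]; last by case: (star_copy_center_neq_leaf ty' ac).
by apply: val_inj; rewrite -(star_copy_center a) ac star_copy_center.
Qed.

Definition permf (tau : {perm T}) (g : fn) : fn := [ffun s => g (tau s)].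

Lemma weight_permf tau g : weight (permf tau g) = weight g.
Proof.
rewrite /weight [RHS](reindex_inj (@perm_inj _ tau)) /=.
by apply: eq_bigr => s _; rewrite ffunE.
Qed.

Section Reflection.
Variable tau : {perm T}.
Hypothesis tau_y : tau y = y.
Hypothesis tauK : involutive tau.

Lemma permfK : involutive (permf tau).
Proof. by move=> g; apply/ffunP => s; rewrite !ffunE tauK. Qed.

Lemma permf_delta t : permf tau (delta t) = delta (tau t).
Proof. by apply/ffunP => s; rewrite !ffunE (can2_eq tauK tauK). Qed.

Lemma tau_leaf t : t != y -> tau t != y.
Proof. by apply: contra_neq => /(congr1 tau); rewrite tauK tau_y. Qed.

Definition reflect_at (a : layer_base) (v : layer_vertex) : layer_vertex :=
  to_vertex (val a + permf tau (val v - val a)).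

Lemma val_reflect_at a v : val (reflect_at a v) = val a + permf tau (val v - val a).
Proof.
apply: to_vertexK; case/andP: (valP a) (valP v) => /eqP ay /eqP wa /andP[/eqP vy wv].
rewrite /is_layer_vertex weightD weight_permf weightB wa subr0 add0r wv.
by rewrite !ffunE tau_y ay vy subrr addr0 eqxx.
Qed.

Lemma reflect_atK a : involutive (reflect_at a).
Proof.
by move=> v; apply: val_inj; rewrite !val_reflect_at addrAC subrr add0r permfK subrKC.
Qed.

Lemma reflect_at_hom a u v : layer_adj u v -> layer_adj (reflect_at a u) (reflect_at a v).
Proof.
have shift w w' t : val w' = val w + delta t ->
    val (reflect_at a w') = val (reflect_at a w) + delta (tau t).
  move=> w'E; rewrite !val_reflect_at w'E; apply/ffunP => s.
  by rewrite !ffunE (can2_eq tauK tauK); ring.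
by case=> t /tau_leaf ty [/shift|/shift] uv; exists (tau t); auto.
Qed.

Lemma reflect_at_aut a : graph_aut layer_adj (reflect_at a).
Proof.
split; first by exists (reflect_at a); split; apply: reflect_atK.
by move=> u v; split=> [|/(reflect_at_hom a)]; rewrite ?reflect_atK //; apply: reflect_at_hom.
Qed.

Lemma reflect_at_copy a x : reflect_at a (star_copy a x) = star_copy a (tau x).
Proof.
apply: val_inj; rewrite val_reflect_at.
have [->|xy] := eqVneq x y.
  by rewrite tau_y star_copy_center; apply/ffunP => s; rewrite !ffunE subrr addr0.
by rewrite !star_copy_leaf ?tau_leaf // [val a + delta x]addrC addrK permf_delta.
Qed.

End Reflection.

Lemma star_copy_transitive a x z x' z' : e x z -> e x' z' ->
  exists2 s, graph_aut layer_adj s &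
    same_edge (s (star_copy a x), s (star_copy a z)) (star_copy a x', star_copy a z').
Proof.
move=> /star_edge_set2[t ty xz_yt] /star_edge_set2[t' ty' xz_yt'].
pose tau := tperm t t'.
have tau_y : tau y = y by rewrite tpermD // eq_sym.
exists (reflect_at tau a); first exact/reflect_at_aut/tpermK.
rewrite !(reflect_at_copy tau_y (tpermK t t')).
apply: (same_edge_map (star_copy a) (p := (tau x, tau z)) (q := (x', z'))).
apply: same_edge_trans (same_edge_map tau (same_edge_set2 id xz_yt)) _.
by rewrite /= tau_y tpermL; apply: same_edge_sym (same_edge_set2 id xz_yt').
Qed.

Lemma layer_adj_copy_edge u v : layer_adj u v -> copy_edges e star_copy u v.
Proof.
case=> t ty [] /(star_copy_step ty) [cy ct].
- by exists (to_base (val u)), y, t; rewrite cy ct; split; [apply: star_center | left].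
- by exists (to_base (val v)), y, t; rewrite cy ct; split; [apply: star_center | right].
Qed.

Lemma layer_copy_edges_invariant : aut_invariant layer_adj (copy_edges e star_copy).
Proof.
have [layer_sym _] := layer_simple.
move=> s [_ s_adj] u v [a [x [z [exz uv]]]]; apply/layer_adj_copy_edge/(s_adj u v).
exact: same_edge_adj layer_sym uv (star_copy_hom a exz).
Qed.

Definition layer_nbr (v : layer_vertex) (t : T) : layer_vertex :=
  to_vertex (if weight (val v) == 0 then val v + delta t else val v - delta t).

Lemma layer_nbrP v w : layer_adj v w -> exists2 t, t != y & w = layer_nbr v t.
Proof.
case=> t ty vw; exists t => //; apply: val_inj; rewrite /layer_nbr.
case: vw => vw; have [w1 w2] := add_delta_weight vw.
- by rewrite w1 eqxx to_vertexK -vw ?(valP w).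
- by rewrite w2 oner_eq0 vw addrK to_vertexK ?(valP w).
Qed.

Lemma layer_nbr_step v t : t != y ->
  val (layer_nbr v t) = val v + delta t \/ val v = val (layer_nbr v t) + delta t.
Proof.
move=> ty; rewrite /layer_nbr; case: (layer_weight v) => wv; rewrite wv ?oner_eq0 ?eqxx.
  by left; rewrite to_vertexK // vertex_up ?vertex_base.
by right; rewrite to_vertexK ?subrK // base_is_vertex // vertex_down ?(valP v).
Qed.

(* [layer_adj] is r-regular, so a star [phi] of K uses every neighbour of its
   centre, in particular the one across the chosen edge at leaf [t0]. *)
Lemma layer_copy_reps_represent : represents e layer_adj (copy_rep_edges star_copy y t0).
Proof.
move=> phi phi_inj phi_hom; pose v := phi y; pose leaves := [set t | t != y].
have leaves_sub : phi @: leaves \subset layer_nbr v @: leaves.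
  apply/subsetP => w /imsetP[t /[!inE] ty ->].
  have [s sy ->] := layer_nbrP (phi_hom _ _ (star_center ty)).
  by apply: imset_f; rewrite inE.
have : #|phi @: leaves| = #|layer_nbr v @: leaves|.
  apply/eqP; rewrite eqn_leq (subset_leq_card leaves_sub) (card_imset _ phi_inj).
  exact: leq_imset_card.
move=> /subset_cardP/(_ leaves_sub)/(_ (layer_nbr v t0)).
rewrite imset_f ?inE // => /imsetP[t /[!inE] ty phi_t].
exists y, t; split; first exact: star_center.
case: (layer_nbr_step v t0_leaf); rewrite phi_t => /(star_copy_step t0_leaf)[cy ct].
- by exists (to_base (val v)); rewrite cy ct; left.
- by exists (to_base (val (phi t))); rewrite cy ct; right.
Qed.

Local Notation reach := (clos_refl_trans layer_vertex layer_adj).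

Lemma shift_base g t k : is_layer_base g -> t != y ->
  is_layer_base (g + (delta t0 - delta t) *+ k).
Proof.
case/andP=> /eqP gy /eqP wg ty.
rewrite /is_layer_base weightD weightMn weightB !weight_delta subrr mul0rn wg addr0 eqxx.
by rewrite !ffunE ffunMnE !ffunE gy !(eq_sym y) (negPf ty) (negPf t0_leaf) subrr mul0rn addr0.
Qed.

Lemma shift_reach g t k : is_layer_base g -> t != y ->
  reach (to_vertex g) (to_vertex (g + (delta t0 - delta t) *+ k)).
Proof.
move=> g_base ty; elim: k => [|k IHk]; first by rewrite mulr0n addr0; apply: rt_refl.
have := shift_base k.+1 g_base ty; have := shift_base k g_base ty.
rewrite mulrSr addrA; set h := g + _ *+ k => h_base h'_base.
apply: rt_trans IHk _; apply: (@rt_trans _ _ _ (to_vertex (h + delta t0))); apply: rt_step.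
  exists t0 => //; left.
  by rewrite !to_vertexK //; [apply: base_is_vertex | apply: vertex_up].
exists t => //; right.
rewrite !to_vertexK ?addrA ?subrK //; last exact: vertex_up.
by rewrite -addrA base_is_vertex.
Qed.

(* Move the mass of each coordinate [t] in [s] to [t0], one unit at a time. *)
Lemma base_reach0 (s : seq T) g : is_layer_base g ->
  (forall x, x \notin s -> x != t0 -> g x = 0) -> reach (to_vertex g) (to_vertex 0).
Proof.
elim: s g => [|t s IHs] g g_base g_supp.
  suff -> : g = 0 by apply: rt_refl.
  apply/ffunP => x; rewrite ffunE; have [->|] := eqVneq x t0; last exact: g_supp.
  case/andP: g_base => _ /eqP; rewrite /weight (bigD1 t0) //= big1 ?addr0 // => x' x't0.
  exact: g_supp.
have gy : g y = 0 by case/andP: g_base => /eqP.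
have [t_triv|t_leaf] := boolP ((t == t0) || (t == y)).
  apply: IHs g_base _ => x xs xt0; have [xt|] := eqVneq x t; last first.
    by move=> xt; apply: g_supp; rewrite // inE negb_or xt.
  by move: t_triv; rewrite -xt (negPf xt0) /= => /eqP->.
move: t_leaf; rewrite negb_or => /andP[tt0 ty].
apply: rt_trans (shift_reach (val (g t)) g_base ty) (IHs _ (shift_base _ g_base ty) _).
move=> x xs xt0; rewrite !ffunE ffunMnE !ffunE (negPf xt0) sub0r mulNrn.
have [->|xt] := eqVneq x t; first by rewrite /= natr_Zp subrr.
by rewrite /= mul0rn subr0 g_supp // inE negb_or xt.
Qed.

Lemma layer_connected : connected_graph layer_adj.
Proof.
apply: (connected_via (proj1 layer_simple) (c := to_vertex 0)) => v.
have reach_base g : is_layer_base g -> reach (to_vertex g) (to_vertex 0).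
  by move=> g_base; apply: (base_reach0 (s := enum T)) => // x; rewrite mem_enum.
case: (layer_weight v) => wv.
  by rewrite -[v]val_to_vertex; apply/reach_base/vertex_base.
have v_down := vertex_down (valP v) wv t0_leaf.
apply: rt_trans (reach_base _ v_down); apply: rt_step; exists t0 => //; right.
by rewrite to_vertexK ?subrK ?base_is_vertex.
Qed.

Lemma card_layer_base t1 : t1 != y -> t1 != t0 -> (n.+3 <= #|{: layer_base}|)%N.
Proof.
move=> t1y t1t0; pose f (c : zq) : fn := (delta t0 - delta t1) *+ val c.
have f_base c : is_layer_base (f c).
  by have := shift_base (val c) layer_base0 t1y; rewrite add0r.
have f_inj : injective (to_base \o f).
  move=> c c' /(congr1 val) /=; rewrite !to_baseK // => /ffunP/(_ t0).
  by rewrite !ffunMnE !ffunE eqxx (eq_sym t0) (negPf t1t0) mulr1n mulr0n subr0 !natr_Zp.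
by have := leq_card _ f_inj; rewrite card_ord.
Qed.

Lemma layer_edge_repr : edge_repr_is e layer_adj #|{: layer_base}| /\
  sym_edge_repr_is e layer_adj (num_edges e * #|{: layer_base}|).
Proof.
have e_yt0 := star_center t0_leaf.
split; first exact: (edge_repr_copies star_copy_inj star_copy_hom star_copy_disjoint e_yt0
  layer_copy_reps_represent).
exact: (sym_edge_repr_copies star_copy_inj star_copy_hom star_copy_disjoint
  star_copy_transitive e_yt0 layer_copy_reps_represent layer_copy_edges_invariant).
Qed.

End StarLayers.

Section SingleEdge.
Variables (T : finType) (e : rel T) (y x : T) (N : nat).
Hypothesis e_simple : fsimple e.
Hypothesis e_yx : e y x.
Hypothesis only_x : forall t, t != y -> t = x.

Definition spoke_adj (u v : option 'I_N) : Prop := (u == None) != (v == None).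

Definition spoke_copy (i : 'I_N) (t : T) : option 'I_N := if t == y then None else Some i.

Lemma spoke_simple : simple_graph spoke_adj.
Proof. by split=> [u v|u]; rewrite /spoke_adj ?eqxx // eq_sym. Qed.

Lemma spoke_connected : connected_graph spoke_adj.
Proof.
apply: (connected_via (proj1 spoke_simple) (c := None)) => -[i|]; last exact: rt_refl.
exact: rt_step.
Qed.

Lemma x_neq_y : x != y.
Proof. by rewrite eq_sym (fsimple_edge_neq e_simple e_yx). Qed.

Lemma spoke_copy_ends i : spoke_copy i y = None /\ spoke_copy i x = Some i.
Proof. by rewrite /spoke_copy eqxx (negPf x_neq_y). Qed.

Lemma single_edge_set2 u v : e u v -> [set u; v] = [set y; x].
Proof.
have [_ e_irr] := e_simple.
have [->|uy] := eqVneq u y; have [->|vy] := eqVneq v y; rewrite ?e_irr //.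
- by rewrite (only_x vy).
- by rewrite (only_x uy) setUC.
- by rewrite (only_x uy) (only_x vy) e_irr.
Qed.

Lemma spoke_adj_copy u v : spoke_adj u v ->
  exists i, same_edge (u, v) (spoke_copy i y, spoke_copy i x).
Proof.
case: u v => [i|] [j|] //= _.
- by exists i; case: (spoke_copy_ends i) => -> ->; apply: same_edge_swap.
- by exists j; case: (spoke_copy_ends j) => -> ->; apply: same_edge_refl.
Qed.

Lemma spoke_edge_repr :
  edge_repr_is e spoke_adj N /\ sym_edge_repr_is e spoke_adj (num_edges e * N).
Proof.
have [spoke_sym _] := spoke_simple.
have copy_yx i u v : e u v ->
    same_edge (spoke_copy i u, spoke_copy i v) (spoke_copy i y, spoke_copy i x).
  by move/single_edge_set2; apply: same_edge_set2.
have copy_inj i : injective (spoke_copy i).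
  move=> t t'; rewrite /spoke_copy; have [->|ty] := eqVneq t y; have [->|t'y] := eqVneq t' y => //.
  by rewrite (only_x ty) (only_x t'y).
have copy_hom i u v : e u v -> spoke_adj (spoke_copy i u) (spoke_copy i v).
  move=> /(copy_yx i) uv; apply: (same_edge_adj spoke_sym uv).
  by case: (spoke_copy_ends i) => -> ->.
have copy_disjoint i j u v u' v' : e u v -> e u' v' ->
    same_edge (spoke_copy i u, spoke_copy i v) (spoke_copy j u', spoke_copy j v') -> i = j.
  move=> /(copy_yx i) uv /(copy_yx j) uv' uu'.
  have := same_edge_trans (same_edge_trans (same_edge_sym uv) uu') uv'.
  by case: (spoke_copy_ends i) (spoke_copy_ends j) => -> -> [-> ->] [[_ [->]]|[]].
have copy_transitive i u v u' v' : e u v -> e u' v' -> exists2 s, graph_aut spoke_adj s &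
    same_edge (s (spoke_copy i u), s (spoke_copy i v)) (spoke_copy i u', spoke_copy i v').
  move=> /(copy_yx i) uv /(copy_yx i) uv'; exists id; first by split; [exists id|].
  exact: same_edge_trans uv (same_edge_sym uv').
have reps_represent : represents e spoke_adj (copy_rep_edges spoke_copy y x).
  move=> phi _ phi_hom; exists y, x; split=> //.
  exact/spoke_adj_copy/phi_hom.
have edges_invariant : aut_invariant spoke_adj (copy_edges e spoke_copy).
  move=> s [_ s_adj] u v [i [t [t' [e_tt' uv]]]].
  have /s_adj/spoke_adj_copy[j sj] : spoke_adj u v.
    exact: same_edge_adj spoke_sym uv (copy_hom i t t' e_tt').
  by exists j, y, x.
split; first by have := edge_repr_copies (@copy_inj) copy_hom copy_disjoint e_yx reps_represent;
  rewrite card_ord.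
by have := sym_edge_repr_copies (@copy_inj) copy_hom copy_disjoint copy_transitive e_yx
  reps_represent edges_invariant; rewrite card_ord.
Qed.

End SingleEdge.

Section EdgeTransitiveStructure.
Variables (T : finType) (e : rel T).
Hypothesis e_simple : fsimple e.
Hypothesis e_connected : forall x y, connect e x y.
Hypothesis e_transitive : edge_transitive e.

Lemma has_nbr a b x : e a b -> exists z, e x z.
Proof.
move=> e_ab; have [w xw] : exists w, w != x.
  have [<-|] := eqVneq a x; last by exists a.
  by exists b; rewrite eq_sym (fsimple_edge_neq e_simple e_ab).
case/connectP: (e_connected x w) => -[|z p] /=; first by move=> _ wx; rewrite wx eqxx in xw.
by case/andP=> xz _ _; exists z.
Qed.

Definition leafb (v : T) : bool := [forall z, forall z', e v z ==> e v z' ==> (z == z')].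

Lemma leafP v : reflect (forall z z', e v z -> e v z' -> z = z') (leafb v).
Proof.
apply: (iffP forallP) => [v_leaf z z' vz vz'|v_leaf z].
  by move/forallP/(_ z'): (v_leaf z); rewrite vz vz' => /eqP.
by apply/forallP => z'; apply/implyP => vz; apply/implyP => vz'; rewrite (v_leaf _ _ vz vz').
Qed.

Lemma leaf_or_two_nbrs a b : e a b ->
  (exists x y, e x y /\ leafb x) \/ (forall x, exists z1 z2, [/\ z1 != z2, e x z1 & e x z2]).
Proof.
move=> e_ab; have [/existsP[x x_leaf]|no_leaf] := boolP [exists x, leafb x].
  by have [y xy] := has_nbr x e_ab; left; exists x, y.
right=> x; move/existsPn/(_ x): no_leaf => /forallPn[z /forallPn[z']].
by rewrite !negb_imply => /and3P[xz xz' zz']; exists z, z'.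
Qed.

Variables x y : T.
Hypothesis e_xy : e x y.
Hypothesis x_leaf : leafb x.

Lemma edge_has_leaf u v : e u v -> leafb u || leafb v.
Proof.
move=> e_uv; have [s [s_aut sxy]] := e_transitive e_xy e_uv.
have sx_leaf : leafb (s x).
  apply/leafP => z z' sxz sxz'; apply: (@perm_inj _ (s^-1)%g).
  by move/leafP: x_leaf; apply; rewrite (s_aut x) permKV.
by case: sxy => -[/= <- _]; rewrite sx_leaf ?orbT.
Qed.

Lemma star_shape t : t = y \/ e y t /\ leafb t.
Proof.
have [e_sym _] := e_simple.
pose S := [pred t | (t == y) || e y t && leafb t].
have S_step t' w : e t' w -> t' \in S -> w \in S.
  move=> e_tw; rewrite !inE => /orP[/eqP t'y|/andP[yt /leafP t_leaf]]; last first.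
    by rewrite (t_leaf w y e_tw) ?eqxx // e_sym.
  move: e_tw; rewrite t'y => e_yw.
  case/orP: (edge_has_leaf e_yw) => [/leafP y_leaf|->]; last by rewrite e_yw orbT.
  have e_yx : e y x by rewrite e_sym.
  by rewrite (y_leaf w x e_yw e_yx) e_yx x_leaf orbT.
have S_closed : closed e S by move=> t' w e_tw; apply/idP/idP; apply: S_step; rewrite // e_sym.
have := closed_connect S_closed (e_connected y t); rewrite !inE eqxx => /esym.
by case/orP => [/eqP|/andP]; [left | right].
Qed.

Lemma star_center t : t != y -> e y t.
Proof. by case: (star_shape t) => [->|[]]; rewrite ?eqxx. Qed.

Lemma star_edge u v : e u v -> u = y \/ v = y.
Proof.
have [e_sym _] := e_simple.
move=> e_uv; case: (star_shape u) => [|[yu u_leaf]]; [left | right] => //.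
by move/leafP: u_leaf; apply=> //; rewrite e_sym.
Qed.

End EdgeTransitiveStructure.

Lemma edge_costly_two_nbrs (T : finType) (e : rel T) (a b : T) :
  fsimple e -> (forall x y, connect e x y) -> edge_transitive e -> e a b ->
  (forall x, exists z1 z2, [/\ z1 != z2, e x z1 & e x z2]) -> edge_costly_connected e.
Proof.
move=> e_simple e_connected e_transitive e_ab two_nbrs m.
exists (hub_vertex T m), (@hub_adj T e m); split; first exact: hub_simple.
split; first exact: hub_connected.
exists m; have [repr sym_repr] := hub_edge_repr m e_simple two_nbrs e_connected e_transitive e_ab.
by split=> //; split=> //; rewrite leq_pmull // (num_edges_gt0 e_ab).
Qed.

Lemma edge_costly_star (T : finType) (e : rel T) (y t0 t1 : T) :
  fsimple e -> (forall t, t != y -> e y t) -> (forall u v, e u v -> u = y \/ v = y) ->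
  t0 != y -> t1 != y -> t1 != t0 -> edge_costly_connected e.
Proof.
move=> e_simple star_c star_e t0y t1y t1t0 m.
exists (layer_vertex y m), (@layer_adj T y m); split; first exact: layer_simple.
split; first exact: layer_connected t0y.
exists #|{: layer_base y m}|; have [repr sym_repr] := layer_edge_repr m e_simple star_c star_e t0y.
split=> //; split=> //; apply: leq_trans (leq_pmull _ (num_edges_gt0 (star_c _ t0y))).
by apply: leq_trans (card_layer_base m t0y t1y t1t0); rewrite leqW ?leqW.
Qed.

Lemma edge_costly_single_edge (T : finType) (e : rel T) (y x : T) :
  fsimple e -> e y x -> (forall t, t != y -> t = x) -> edge_costly_connected e.
Proof.
move=> e_simple e_yx only_x m.
exists (option 'I_m), (@spoke_adj m); split; first exact: spoke_simple.
split; first exact: spoke_connected.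
exists m; have [repr sym_repr] := spoke_edge_repr m e_simple e_yx only_x.
by split=> //; split=> //; rewrite leq_pmull // (num_edges_gt0 e_yx).
Qed.

Theorem proposition1 (T : finType) (e : rel T) :
  fsimple e -> fconnected e -> edge_transitive e -> 0 < num_edges e ->
  edge_costly_connected e.
Proof.
move=> e_simple [_ e_connected] e_transitive /edge_of_num_edges[a [b e_ab]].
case: (leaf_or_two_nbrs e_simple e_connected e_ab) => [[x [y [e_xy x_leaf]]]|two_nbrs];
  last exact: edge_costly_two_nbrs e_simple e_connected e_transitive e_ab two_nbrs.
have star_c := star_center e_simple e_connected e_transitive e_xy x_leaf.
have star_e := star_edge e_simple e_connected e_transitive e_xy x_leaf.
have x_y := fsimple_edge_neq e_simple e_xy.
have [/existsP[t /andP[ty tx]]|no_third] := boolP [exists t, (t != y) && (t != x)].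
  exact: edge_costly_star e_simple star_c star_e x_y ty tx.
apply: (edge_costly_single_edge e_simple (star_c x x_y)) => t ty.
by apply/eqP; apply: contraNT no_third => tx; apply/existsP; exists t; rewrite ty tx.
Qed.
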